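(* Let $T^r$ be a rooted binary phylogenetic tree on taxon set $X$ with $n=|X|$, whose edges $e$ carry real edge lengths $\lambda_e$. If $T^r$ is ultrametric, then the rankings of the taxa induced by the original Shapley Value $SV_{T^r}$ and by the modified Shapley Value $\widetilde{SV}_{T^r}$ are identical; that is, for all $a,b\in X$, $$SV_{T^r}(a)\ge SV_{T^r}(b)\iff \widetilde{SV}_{T^r}(a)\ge \widetilde{SV}_{T^r}(b).$$
   Context: A rooted binary phylogenetic tree on $X$ is a tree whose leaves are bijectively labelled by $X$, in which every internal vertex has degree 3 except a distinguished root vertex $\rho$ of degree 2. It is ultrametric if the path length (sum of edge lengths) from every leaf to the root is the same. For $S\subseteq X$, the rooted phylogenetic diversity $PD^r(S)$ is the sum of the edge lengths of the smallest subtree of $T^r$ containing all leaves in $S$ and the root (with $PD^r(\emptyset)=0$). The original Shapley Value of $a\in X$ is $$SV_{T^r}(a)=\frac{1}{n!}\sum_{S\subseteq X,\ a\in S}(|S|-1)!\,(n-|S|)!\,\bigl(PD^r(S)-PD^r(S\setminus\{a\})\bigr),$$ and the modified Shapley Value is the same sum restricted to subsets with $|S|\ge 2$: $$\widetilde{SV}_{T^r}(a)=\frac{1}{n!}\sum_{S\subseteq X,\ a\in S,\ |S|\ge 2}(|S|-1)!\,(n-|S|)!\,\bigl(PD^r(S)-PD^r(S\setminus\{a\})\bigr).$$ A function $f:X\to\mathbb{R}$ induces the ranking ordering the taxa in decreasing order of $f$ (taxon $x$ is placed before $y$ precisely if $f(x)\ge f(y)$). *)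

From HB Require Import structures.
From mathcomp Require Import all_boot all_order all_algebra.
From mathcomp Require Import reals.
Set Implicit Arguments. Unset Strict Implicit. Unset Printing Implicit Defensive.
Import Order.TTheory GRing.Theory Num.Theory.
Local Open Scope ring_scope.

(* A rooted tree on the finite vertex type V is encoded by its root and a
   parent function: parent root = root, and every vertex reaches the root by
   iterating parent.  The edges are the pairs (parent v, v) for v <> root;
   the edge (parent v, v) is identified with its lower endpoint v. *)
Section Tree.
Variables (V : finType) (root : V) (parent : V -> V).

Definition is_rooted_tree : Prop :=
  parent root = root /\ forall v : V, exists k : nat, iter k parent v = root.

Definition children (v : V) : {set V} :=
  [set u | (u != root) && (parent u == v)].

Definition anc (u v : V) : bool :=
  [exists k : 'I_#|V|.+1, iter k parent v == u].

Definition is_leaf (v : V) : bool := (v != root) && (#|children v| == 0%N).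

(* binary: the root has degree 2 (two children); every other vertex has
   degree 1 (leaf) or degree 3 (one parent, two children). *)
Definition is_binary : Prop :=
  #|children root| = 2%N /\
  forall v, v != root -> #|children v| = 0%N \/ #|children v| = 2%N.

Definition leaf_labelling (X : finType) (phi : X -> V) : Prop :=
  injective phi /\ forall v, is_leaf v <-> exists x, phi x = v.

Definition rooted_binary_phylo_tree (X : finType) (phi : X -> V) : Prop :=
  is_rooted_tree /\ is_binary /\ leaf_labelling phi.

Variable R : realType.
Variable lambda : V -> R. (* lambda v = length of the edge (parent v, v) *)

Definition root_dist (v : V) : R :=
  \sum_(u | (u != root) && anc u v) lambda u.

Definition ultrametric (X : finType) (phi : X -> V) : Prop :=
  forall x y : X, root_dist (phi x) = root_dist (phi y).

(* rooted phylogenetic diversity: total length of the edges of the smallest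
   subtree containing the root and the leaves labelled by S; an edge
   (parent u, u) belongs to it iff u is an ancestor of some leaf of S. *)
Definition PDr (X : finType) (phi : X -> V) (S : {set X}) : R :=
  \sum_(u | (u != root) && [exists x in S, anc u (phi x)]) lambda u.

Definition shapley (X : finType) (phi : X -> V) (a : X) : R :=
  (#|X|`!%:R)^-1 *
  \sum_(S : {set X} | a \in S)
     ((#|S|.-1)`!%:R * (#|X| - #|S|)`!%:R * (PDr phi S - PDr phi (S :\ a))).

Definition mod_shapley (X : finType) (phi : X -> V) (a : X) : R :=
  (#|X|`!%:R)^-1 *
  \sum_(S : {set X} | (a \in S) && (2 <= #|S|)%N)
     ((#|S|.-1)`!%:R * (#|X| - #|S|)`!%:R * (PDr phi S - PDr phi (S :\ a))).

End Tree.

From HB Require Import structures.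
From mathcomp Require Import all_boot all_order all_algebra.
From mathcomp Require Import reals.
Import Order.TTheory GRing.Theory Num.Theory.
Local Open Scope ring_scope.

(* The two Shapley values differ only by the coalition {a}, whose marginal
   contribution is PD({a}) - PD(∅), the root-to-leaf distance of a, weighted
   by (n-1)!/n!.  On an ultrametric tree this term is the same for every
   taxon, so it shifts all values by one constant and cannot change the
   ranking. *)

Lemma memS_card_lt2E (X : finType) (a : X) (S : {set X}) :
  ((a \in S) && ~~ (2 <= #|S|)%N) = (S == [set a]).
Proof.
apply/idP/idP.
- case/andP=> aS; rewrite -ltnNge ltnS => cardS.
  by rewrite eq_sym eqEcard cards1 cardS andbT sub1set.
- by move/eqP->; rewrite set11 cards1.
Qed.

Section PhyloDiversity.
Variables (R : realType) (V X : finType) (root : V) (parent : V -> V).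
Variables (phi : X -> V) (lambda : V -> R).

Lemma PDr_set0 : PDr root parent lambda phi set0 = 0.
Proof. by rewrite /PDr big1 // => u /andP[_ /existsP[x]]; rewrite in_set0. Qed.

Lemma PDr_set1 (a : X) :
  PDr root parent lambda phi [set a] = root_dist root parent lambda (phi a).
Proof.
apply: eq_bigl => u; congr (_ && _).
apply/existsP/idP => [[x /andP[/set1P -> //]] | anc_u]; exists a.
by rewrite set11.
Qed.

Lemma shapleyE (a : X) :
  shapley root parent lambda phi a = mod_shapley root parent lambda phi a +
  (#|X|`!%:R)^-1 * ((#|X| - 1)`!%:R * root_dist root parent lambda (phi a)).
Proof.
rewrite /shapley /mod_shapley -mulrDr; congr (_ * _).
rewrite (bigID (fun S : {set X} => (2 <= #|S|)%N)) /=; congr (_ + _).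
rewrite (big_pred1 [set a]); last by move=> S; rewrite /= memS_card_lt2E.
by rewrite cards1 /= mul1r setDv PDr_set0 subr0 PDr_set1.
Qed.

End PhyloDiversity.

Theorem proposition1 (R : realType) (V X : finType) (root : V)
  (parent : V -> V) (phi : X -> V) (lambda : V -> R) :
  rooted_binary_phylo_tree root parent phi ->
  ultrametric root parent lambda phi ->
  forall a b : X,
    (shapley root parent lambda phi a >= shapley root parent lambda phi b) <->
    (mod_shapley root parent lambda phi a >= mod_shapley root parent lambda phi b).
Proof.
move=> _ ultra a b.
by rewrite !shapleyE (ultra a b) lerD2r.
Qed.
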